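(* Let $d,a,b$ be positive integers, $r=(d+2b)/d$, $R=(a+d)/d$, with $R\ge3r$; let $\Phi$ and $x_0<r<x_1$ be as in the context. Let $x\in(1,\infty)$. (i) If $x\in[x_0,x_1]$, there is a unique $y_x\ge0$ with $x+iy_x\ne r$ and $\Phi(x+iy_x)=0$; moreover $\Phi(x+iy)>0$ for $0<y<y_x$ and $\Phi(x+iy)<0$ for $y>y_x$. (ii) If $x\notin[x_0,x_1]$, then $\Phi(x+iy)<0$ for every $y\ge0$.
   Context: For $t\in\mathbb C\setminus\{\pm1,\pm r\}$ let $\Phi(t)=d\log|t+r|-d\log|t-r|+(a+d)(\log|t-1|-\log|t+1|)$. Under $R\ge3r$, there is a unique $x_0\in(1,r)$ and a unique $x_1\in(r,\infty)$ with $\Phi(x_0)=\Phi(x_1)=0$. *)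

From Stdlib Require Import Reals.
Open Scope R_scope.

Definition cmod (x y : R) : R := sqrt (x ^ 2 + y ^ 2).

Definition rr (d b : nat) : R := (INR d + 2 * INR b) / INR d.
Definition RR (d a : nat) : R := (INR a + INR d) / INR d.

(* Phi(t) at t = x + i y, with parameter r:
   Phi(t) = d log|t+r| - d log|t-r| + (a+d)(log|t-1| - log|t+1|) *)
Definition Phi (d a b : nat) (x y : R) : R :=
  let r := rr d b in
  INR d * ln (cmod (x + r) y) - INR d * ln (cmod (x - r) y)
  + (INR a + INR d) * (ln (cmod (x - 1) y) - ln (cmod (x + 1) y)).

From Stdlib Require Import Reals Lra Ranalysis5.
From Coquelicot Require Import Coquelicot.
Open Scope R_scope.

(* With s = y^2 we have Phi (x + i y) = Psi x s, where
   Psi x s = d/2 ln (((x+r)^2 + s) / ((x-r)^2 + s)) + (a+d)/2 ln (((x-1)^2 + s) / ((x+1)^2 + s)).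
   For fixed x > 1 the sign of d/ds Psi x s is that of a quadratic in s whose leading and linear
   coefficients are positive, so Psi x decreases and then increases; since Psi x s -> 0 as
   s -> oo, it is negative from its turning point on.  Hence Psi x has at most one zero in s > 0,
   and it has one exactly when Psi x 0 > 0 or x = r (where Psi r s -> +oo as s -> 0).
   On the real axis, x |-> Psi x 0 increases on (1, r), decreases on (r, x_star) and increases
   towards 0 on (x_star, oo), so it is positive exactly between its zeros x0 < r < x1. *)

Lemma ln_sub_le_div u v : 0 < v -> v <= u -> ln u - ln v <= (u - v) / v.
Proof.
  intros Hv Hvu.
  assert (Hdiv : 0 < u / v) by (apply Rdiv_lt_0_compat; lra).
  pose proof (exp_ineq1_le (ln (u / v))) as Hexp.
  rewrite exp_ln in Hexp by exact Hdiv.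
  rewrite <- ln_div by lra.
  replace ((u - v) / v) with (u / v - 1) by (field; lra).
  lra.
Qed.

Lemma ln_sqrt u : 0 < u -> ln (sqrt u) = ln u / 2.
Proof.
  intros Hu. assert (0 < sqrt u) by (apply sqrt_lt_R0; exact Hu).
  rewrite <- (sqrt_sqrt u) at 2 by lra. rewrite ln_mult by assumption. field.
Qed.

Lemma pow2_lt_compat a b : 0 <= a -> a < b -> a ^ 2 < b ^ 2.
Proof. intros; nra. Qed.

Lemma MVT_strict_decreasing (f f' : R -> R) u v : u < v ->
  (forall c, u <= c <= v -> derivable_pt_lim f c (f' c)) ->
  (forall c, u < c < v -> f' c < 0) -> f v < f u.
Proof.
  intros Huv Hder Hneg.
  destruct (MVT_cor2 f f' u v Huv Hder) as (c & Hmvt & Hc).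
  pose proof (Hneg c Hc). nra.
Qed.

Lemma MVT_strict_increasing (f f' : R -> R) u v : u < v ->
  (forall c, u <= c <= v -> derivable_pt_lim f c (f' c)) ->
  (forall c, u < c < v -> 0 < f' c) -> f u < f v.
Proof.
  intros Huv Hder Hpos.
  destruct (MVT_cor2 f f' u v Huv Hder) as (c & Hmvt & Hc).
  pose proof (Hpos c Hc). nra.
Qed.

Lemma increasing_vanishing_at_infinity_neg (h : R -> R) s :
  (forall u v, s <= u -> u < v -> h u < h v) ->
  (forall eps, 0 < eps -> exists T, forall t, T <= t -> h t < eps) ->
  h s < 0.
Proof.
  intros Hincr Hlim.
  destruct (Rlt_or_le (h s) 0) as [Hneg | Hnn]; [exact Hneg | exfalso].
  assert (Hstep : h s < h (s + 1)) by (apply Hincr; lra).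
  destruct (Hlim (h (s + 1) - h s)) as [T HT]; [lra |].
  pose proof (HT (Rmax T (s + 2)) (Rmax_l _ _)).
  assert (h (s + 1) < h (Rmax T (s + 2))) by (apply Hincr; pose proof (Rmax_r T (s + 2)); lra).
  lra.
Qed.

Lemma quadratic_sign_change al be ga : 0 < al -> 0 <= be ->
  exists ss, 0 <= ss /\
    (forall s, 0 <= s < ss -> al * s ^ 2 + be * s + ga < 0) /\
    (forall s, ss < s -> 0 < al * s ^ 2 + be * s + ga).
Proof.
  intros Hal Hbe.
  set (q s := al * s ^ 2 + be * s + ga).
  assert (Hincr : forall u v, 0 <= u -> u < v -> q u < q v).
  { intros u v Hu Huv.
    assert (Hdiff : q v - q u = (v - u) * (al * (u + v) + be)) by (unfold q; ring).
    assert (0 < (v - u) * (al * (u + v) + be)) by (apply Rmult_lt_0_compat; nra).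
    lra. }
  destruct (Rle_or_lt 0 ga) as [Hga | Hga].
  - exists 0. split; [lra | split; [intros; lra |]].
    intros s Hs. assert (q 0 < q s) by (apply Hincr; lra). unfold q in *. lra.
  - set (sq := sqrt (be ^ 2 - 4 * al * ga)).
    assert (Hsq : sq * sq = be ^ 2 - 4 * al * ga) by (apply sqrt_sqrt; nra).
    assert (0 <= sq) by apply sqrt_pos.
    set (ss := (sq - be) / (2 * al)).
    assert (Hss : 0 <= ss) by (apply Rmult_le_pos; [nra | left; apply Rinv_0_lt_compat; lra]).
    assert (Hroot : q ss = 0).
    { unfold q, ss. replace ga with ((be ^ 2 - sq * sq) / (4 * al)) by (rewrite Hsq; field; lra).
      field. lra. }
    exists ss. split; [exact Hss | split].
    + intros s Hs. rewrite <- Hroot. apply Hincr; lra.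
    + intros s Hs. rewrite <- Hroot. apply Hincr; lra.
Qed.

Section Psi.

Variables d D r : R.
Hypothesis Hd : 0 < d.
Hypothesis HD : d * r < D.
Hypothesis Hr : 1 < r.

Lemma d_lt_D_r : d < D * r.
Proof.
  assert (d < d * r) by nra.
  assert (d * r * r < D * r) by (apply Rmult_lt_compat_r; lra).
  nra.
Qed.

Definition Psi (x s : R) : R :=
  d / 2 * (ln ((x + r) ^ 2 + s) - ln ((x - r) ^ 2 + s))
  + D / 2 * (ln ((x - 1) ^ 2 + s) - ln ((x + 1) ^ 2 + s)).

Definition Psi_dom (x s : R) : Prop := 0 <= s /\ 0 < (x - r) ^ 2 + s.

Lemma Psi_dom_le x u v : Psi_dom x u -> u <= v -> Psi_dom x v.
Proof. unfold Psi_dom; lra. Qed.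

Lemma Psi_dom_0 x : x <> r -> Psi_dom x 0.
Proof.
  intros Hx. split; [lra |].
  assert (Hxr : x - r <> 0) by lra. destruct (Rdichotomy _ _ Hxr); nra.
Qed.

Lemma Psi_bound x t : 1 < x -> Psi_dom x t ->
  Psi x t <= 2 * d * x * r / ((x - r) ^ 2 + t).
Proof.
  intros Hx [Ht Hxr]. unfold Psi.
  assert (Hfar : ln ((x + r) ^ 2 + t) - ln ((x - r) ^ 2 + t) <= 4 * x * r / ((x - r) ^ 2 + t)).
  { replace (4 * x * r) with (((x + r) ^ 2 + t) - ((x - r) ^ 2 + t)) by ring.
    apply ln_sub_le_div; nra. }
  assert (ln ((x - 1) ^ 2 + t) < ln ((x + 1) ^ 2 + t)) by (apply ln_increasing; nra).
  assert (0 < D) by nra.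
  replace (2 * d * x * r / ((x - r) ^ 2 + t)) with (d / 2 * (4 * x * r / ((x - r) ^ 2 + t)))
    by (field; lra).
  nra.
Qed.

Section Vertical.

Variable x : R.
Hypothesis Hx : 1 < x.

Definition Q (s : R) : R :=
  D * (((x + r) ^ 2 + s) * ((x - r) ^ 2 + s))
  - d * r * (((x - 1) ^ 2 + s) * ((x + 1) ^ 2 + s)).

Definition Psi_s_deriv (s : R) : R :=
  2 * x * Q s /
  (((x + r) ^ 2 + s) * ((x - r) ^ 2 + s) * (((x - 1) ^ 2 + s) * ((x + 1) ^ 2 + s))).

Lemma Psi_s_derivative s : Psi_dom x s -> derivable_pt_lim (Psi x) s (Psi_s_deriv s).
Proof.
  intros [Hs Hxr].
  assert (0 < (x + r) ^ 2 + s /\ 0 < (x - 1) ^ 2 + s /\ 0 < (x + 1) ^ 2 + s)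
    as (H1 & H2 & H3) by (repeat split; nra).
  apply is_derive_Reals. unfold Psi, Psi_s_deriv, Q.
  auto_derive; [repeat split; lra |].
  field. repeat split; lra.
Qed.

Lemma Psi_s_continuous s : Psi_dom x s -> continuity_pt (Psi x) s.
Proof.
  intros Hs. apply derivable_continuous_pt.
  eexists. apply Psi_s_derivative, Hs.
Qed.

Lemma Q_sign_change : exists ss, 0 <= ss /\
  (forall s, 0 <= s < ss -> Q s < 0) /\ (forall s, ss < s -> 0 < Q s).
Proof.
  destruct (quadratic_sign_change (D - d * r)
     (2 * ((D - d * r) * x ^ 2 + r * (D * r - d)))
     (D * ((x + r) ^ 2 * (x - r) ^ 2) - d * r * ((x - 1) ^ 2 * (x + 1) ^ 2)))
    as (ss & Hss & Hneg & Hpos).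
  - lra.
  - pose proof d_lt_D_r. nra.
  - exists ss. split; [exact Hss | split]; intros s Hs;
      [specialize (Hneg s Hs) | specialize (Hpos s Hs)]; unfold Q; nra.
Qed.

Section Turning_point.

Variable ss : R.
Hypothesis Q_neg_below : forall s, 0 <= s < ss -> Q s < 0.
Hypothesis Q_pos_above : forall s, ss < s -> 0 < Q s.

Lemma Psi_s_decreasing u v : Psi_dom x u -> u < v <= ss -> Psi x v < Psi x u.
Proof.
  intros Hu Huv.
  apply (MVT_strict_decreasing (Psi x) Psi_s_deriv u v); [lra | |].
  - intros c Hc. apply Psi_s_derivative, (Psi_dom_le x u); [exact Hu | lra].
  - intros c Hc. destruct (Psi_dom_le x u c Hu ltac:(lra)) as [Hc0 Hcr].
    assert (Q c < 0) by (apply Q_neg_below; lra).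
    unfold Psi_s_deriv. apply Rlt_div_l; [repeat apply Rmult_lt_0_compat; nra | nra].
Qed.

Lemma Psi_s_increasing u v : Psi_dom x u -> ss <= u -> u < v -> Psi x u < Psi x v.
Proof.
  intros Hu Hssu Huv.
  apply (MVT_strict_increasing (Psi x) Psi_s_deriv u v); [lra | |].
  - intros c Hc. apply Psi_s_derivative, (Psi_dom_le x u); [exact Hu | lra].
  - intros c Hc. destruct (Psi_dom_le x u c Hu ltac:(lra)) as [Hc0 Hcr].
    assert (0 < Q c) by (apply Q_pos_above; lra).
    unfold Psi_s_deriv. apply Rdiv_lt_0_compat; [nra | repeat apply Rmult_lt_0_compat; nra].
Qed.

Lemma Psi_s_tail s : Psi_dom x s -> ss <= s -> Psi x s < 0.
Proof.
  intros Hs Hss.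
  apply increasing_vanishing_at_infinity_neg.
  - intros u v Hu Huv. apply Psi_s_increasing; [apply (Psi_dom_le x s u Hs) | |]; lra.
  - intros eps Heps.
    assert (Hc : 0 < 2 * d * x * r) by (repeat apply Rmult_lt_0_compat; lra).
    exists (1 + 2 * d * x * r / eps). intros t Ht.
    assert (0 < 2 * d * x * r / eps) by (apply Rdiv_lt_0_compat; lra).
    pose proof (pow2_ge_0 (x - r)).
    assert (Htd : Psi_dom x t) by (split; lra).
    eapply Rle_lt_trans; [apply Psi_bound; assumption |].
    assert (2 * d * x * r < t * eps) by (apply Rlt_div_l; lra).
    apply Rlt_div_l; [lra | nra].
Qed.

Lemma Psi_s_neg_of_nonpos_at_0 : x <> r -> Psi x 0 <= 0 -> forall s, 0 < s -> Psi x s < 0.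
Proof.
  intros Hxr H0 s Hs.
  destruct (Rle_or_lt s ss) as [Hle | Hlt].
  - assert (Psi x s < Psi x 0) by (apply Psi_s_decreasing; [apply Psi_dom_0 | lra]; exact Hxr).
    lra.
  - apply Psi_s_tail; [apply (Psi_dom_le x 0); [apply Psi_dom_0 |] |]; lra.
Qed.

Lemma Psi_s_unique_root s1 : Psi_dom x s1 -> 0 < Psi x s1 ->
  exists z, s1 < z /\ Psi x z = 0 /\
    (forall s, Psi_dom x s -> s < z -> 0 < Psi x s) /\ (forall s, z < s -> Psi x s < 0).
Proof.
  intros Hs1 Hpos.
  assert (Hlt : s1 < ss).
  { destruct (Rlt_or_le s1 ss) as [H | H]; [exact H |].
    pose proof (Psi_s_tail s1 Hs1 H). lra. }
  assert (Hdom : forall s, s1 <= s -> Psi_dom x s) by (intros; apply (Psi_dom_le x s1); auto).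
  assert (Hss : Psi x ss < 0) by (apply Psi_s_tail; [apply Hdom |]; lra).
  destruct (IVT_interv (opp_fct (Psi x)) s1 ss) as [z [Hz Hroot]]; unfold opp_fct in *.
  - intros c Hc. apply continuity_pt_opp, Psi_s_continuous, Hdom; lra.
  - exact Hlt.
  - lra.
  - lra.
  - assert (Hz1 : s1 < z) by (destruct Hz as [[H | H] _]; [exact H | subst; lra]).
    assert (Hzero : Psi x z = 0) by lra.
    exists z. split; [exact Hz1 | split; [exact Hzero | split]].
    + intros s Hs Hsz. rewrite <- Hzero. apply Psi_s_decreasing; [exact Hs | lra].
    + intros s Hzs. destruct (Rle_or_lt s ss) as [Hle | Hgt].
      * rewrite <- Hzero. apply Psi_s_decreasing; [apply Hdom |]; lra.
      * apply Psi_s_tail; [apply Hdom |]; lra.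
Qed.

End Turning_point.

End Vertical.

Lemma Psi_at_r_pos : exists s, Psi_dom r s /\ 0 < Psi r s.
Proof.
  set (L1 := ln ((r + r) ^ 2)).
  set (L2 := ln ((r - 1) ^ 2)).
  set (L3 := ln ((r + 1) ^ 2 + 1)).
  set (K := L1 + D / d * (L2 - L3) - 1).
  (* [ln s <= K] forces [Psi r s >= d / 2]. *)
  set (s := Rmin 1 (exp K)).
  assert (Hs0 : 0 < s) by (apply Rmin_glb_lt; [lra | apply exp_pos]).
  assert (Hs1 : s <= 1) by apply Rmin_l.
  assert (HlnK : ln s <= K) by (rewrite <- (ln_exp K); apply ln_le; [exact Hs0 | apply Rmin_r]).
  exists s. unfold Psi_dom, Psi. replace ((r - r) ^ 2 + s) with s by ring.
  split; [split; lra |].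
  assert (L1 <= ln ((r + r) ^ 2 + s)) by (apply ln_le; nra).
  assert (L2 <= ln ((r - 1) ^ 2 + s)) by (apply ln_le; nra).
  assert (ln ((r + 1) ^ 2 + s) <= L3) by (apply ln_le; nra).
  assert (0 < D) by nra.
  assert (HK : d / 2 * (L1 - K) = d / 2 - D / 2 * (L2 - L3)) by (unfold K; field; lra).
  assert (d / 2 * (L1 - K) <= d / 2 * (ln ((r + r) ^ 2 + s) - ln s))
    by (apply Rmult_le_compat_l; lra).
  assert (D / 2 * (L2 - L3) <= D / 2 * (ln ((r - 1) ^ 2 + s) - ln ((r + 1) ^ 2 + s)))
    by (apply Rmult_le_compat_l; lra).
  lra.
Qed.

Definition x_star : R := sqrt (r * (D * r - d) / (D - d * r)).

Lemma x_star_sq : x_star ^ 2 = r * (D * r - d) / (D - d * r).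
Proof.
  unfold x_star. rewrite pow2_sqrt; [reflexivity |].
  pose proof d_lt_D_r. apply Rlt_le, Rdiv_lt_0_compat; nra.
Qed.

Lemma r_lt_x_star : r < x_star.
Proof.
  assert (0 <= x_star) by apply sqrt_pos.
  assert (r ^ 2 < x_star ^ 2).
  { rewrite x_star_sq. apply (Rlt_div_r (r ^ 2)); [lra |].
    assert (r < r ^ 3) by nra.
    assert (d * r < d * r ^ 3) by (apply Rmult_lt_compat_l; lra).
    replace (r ^ 2 * (D - d * r)) with (D * r ^ 2 - d * r ^ 3) by ring.
    replace (r * (D * r - d)) with (D * r ^ 2 - d * r) by ring.
    lra. }
  destruct (Rlt_or_le r x_star) as [Hlt | Hle]; [exact Hlt |].
  assert (x_star ^ 2 <= r ^ 2) by (apply pow_incr; lra).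
  lra.
Qed.

Definition Psi0_deriv (c : R) : R :=
  2 * (D - d * r) * (c ^ 2 - x_star ^ 2) / ((c ^ 2 - 1) * (c ^ 2 - r ^ 2)).

Lemma Psi0_derivative c : 1 < c -> c <> r ->
  derivable_pt_lim (fun t => Psi t 0) c (Psi0_deriv c).
Proof.
  intros Hc Hcr.
  assert (Hcr' : c - r <> 0) by lra.
  assert (0 < (c - r) ^ 2) by (destruct (Rdichotomy _ _ Hcr'); nra).
  assert (c ^ 2 - r ^ 2 <> 0) by (replace (c ^ 2 - r ^ 2) with ((c - r) * (c + r)) by ring;
    apply Rmult_integral_contrapositive; split; lra).
  apply is_derive_Reals. unfold Psi, Psi0_deriv.
  auto_derive; [repeat split; nra |].
  rewrite x_star_sq. field. repeat split; nra.
Qed.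

Lemma Psi0_increasing_below_r u v : 1 < u -> u < v -> v < r -> Psi u 0 < Psi v 0.
Proof.
  intros Hu Huv Hv. pose proof r_lt_x_star.
  apply (MVT_strict_increasing (fun t => Psi t 0) Psi0_deriv u v Huv).
  - intros c Hc. apply Psi0_derivative; lra.
  - intros c Hc. unfold Psi0_deriv, Rdiv.
    assert (c ^ 2 < x_star ^ 2) by (apply pow2_lt_compat; lra).
    assert (2 * (D - d * r) * (c ^ 2 - x_star ^ 2) < 0) by nra.
    assert (c ^ 2 < r ^ 2) by (apply pow2_lt_compat; lra).
    assert (/ ((c ^ 2 - 1) * (c ^ 2 - r ^ 2)) < 0)
      by (apply Rinv_lt_0_compat, Rmult_pos_neg; nra).
    nra.
Qed.

Lemma Psi0_decreasing_after_r u v : r < u -> u < v -> v <= x_star -> Psi v 0 < Psi u 0.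
Proof.
  intros Hu Huv Hv.
  apply (MVT_strict_decreasing (fun t => Psi t 0) Psi0_deriv u v Huv).
  - intros c Hc. apply Psi0_derivative; lra.
  - intros c Hc.
    assert (c ^ 2 < x_star ^ 2) by (apply pow2_lt_compat; lra).
    assert (r ^ 2 < c ^ 2) by (apply pow2_lt_compat; lra).
    assert (1 < r ^ 2) by (replace 1 with (1 ^ 2) by ring; apply pow2_lt_compat; lra).
    apply Rdiv_neg_pos; [apply Rmult_pos_neg | apply Rmult_lt_0_compat]; lra.
Qed.

Lemma Psi0_increasing_after_x_star u v : x_star <= u -> u < v -> Psi u 0 < Psi v 0.
Proof.
  intros Hu Huv. pose proof r_lt_x_star.
  apply (MVT_strict_increasing (fun t => Psi t 0) Psi0_deriv u v Huv).
  - intros c Hc. apply Psi0_derivative; lra.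
  - intros c Hc.
    assert (x_star ^ 2 < c ^ 2) by (apply pow2_lt_compat; lra).
    assert (r ^ 2 < c ^ 2) by (apply pow2_lt_compat; lra).
    assert (1 < r ^ 2) by (replace 1 with (1 ^ 2) by ring; apply pow2_lt_compat; lra).
    apply Rdiv_lt_0_compat; repeat apply Rmult_lt_0_compat; lra.
Qed.

Lemma Psi0_tail u : x_star <= u -> Psi u 0 < 0.
Proof.
  intros Hu. pose proof r_lt_x_star.
  apply (increasing_vanishing_at_infinity_neg (fun t => Psi t 0)).
  - intros v w Hv Hvw. apply Psi0_increasing_after_x_star; lra.
  - intros eps Heps.
    assert (0 < 8 * d * r / eps) by (apply Rdiv_lt_0_compat; nra).
    exists (2 * r + 8 * d * r / eps). intros t Ht.
    assert (Htd : Psi_dom t 0) by (apply Psi_dom_0; lra).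
    eapply Rle_lt_trans; [apply Psi_bound; [lra | exact Htd] |].
    assert (8 * d * r < t * eps) by (apply Rlt_div_l; lra).
    assert (t * (8 * d * r) < t * (t * eps)) by (apply Rmult_lt_compat_l; lra).
    assert (eps * (t * t) <= eps * (4 * ((t - r) ^ 2 + 0)))
      by (apply Rmult_le_compat_l; nra).
    apply Rlt_div_l; nra.
Qed.

Section Real_roots.

Variables x0 x1 : R.
Hypothesis Hx0 : 1 < x0 < r.
Hypothesis Psi_x0 : Psi x0 0 = 0.
Hypothesis Hx1 : r < x1.
Hypothesis Psi_x1 : Psi x1 0 = 0.

Lemma x1_lt_x_star : x1 < x_star.
Proof.
  destruct (Rlt_or_le x1 x_star) as [H | H]; [exact H |].
  pose proof (Psi0_tail x1 H). lra.
Qed.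

Lemma Psi0_pos_between x : x0 < x < x1 -> x <> r -> 0 < Psi x 0.
Proof.
  intros Hx Hxr. pose proof x1_lt_x_star.
  destruct (Rlt_or_le x r) as [Hlt | Hle].
  - rewrite <- Psi_x0 at 1. apply Psi0_increasing_below_r; lra.
  - rewrite <- Psi_x1 at 1. apply Psi0_decreasing_after_r; lra.
Qed.

Lemma Psi0_neg_outside x : 1 < x -> x < x0 \/ x1 < x -> Psi x 0 < 0.
Proof.
  intros Hx [Hlt | Hgt]; pose proof x1_lt_x_star.
  - rewrite <- Psi_x0 at 2. apply Psi0_increasing_below_r; lra.
  - destruct (Rle_or_lt x x_star) as [Hle | Hgt'].
    + rewrite <- Psi_x1 at 2. apply Psi0_decreasing_after_r; lra.
    + apply Psi0_tail; lra.
Qed.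

Lemma Psi_root_profile x : 1 < x -> x0 <= x <= x1 ->
  exists z, Psi_dom x z /\ (x = r -> 0 < z) /\ Psi x z = 0 /\
    (forall s, Psi_dom x s -> s < z -> 0 < Psi x s) /\ (forall s, z < s -> Psi x s < 0).
Proof.
  intros Hx Hin.
  destruct (Q_sign_change x) as (ss & _ & Q_neg & Q_pos).
  destruct (Req_dec x r) as [-> | Hxr].
  - destruct Psi_at_r_pos as (s1 & Hs1 & Hpos).
    destruct (Psi_s_unique_root r Hx ss Q_neg Q_pos s1 Hs1 Hpos) as (z & Hz & Hroot).
    exists z. destruct Hs1. split; [apply (Psi_dom_le r s1); [split |]; lra |].
    split; [lra | exact Hroot].
  - destruct (Rlt_or_le 0 (Psi x 0)) as [Hpos | Hnpos].
    + destruct (Psi_s_unique_root x Hx ss Q_neg Q_pos 0 (Psi_dom_0 x Hxr) Hpos)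
        as (z & Hz & Hroot).
      exists z. split; [apply (Psi_dom_le x 0); [apply Psi_dom_0 |]; lra |].
      split; [lra | exact Hroot].
    + assert (Hzero : Psi x 0 = 0).
      { destruct (Req_dec x x0) as [-> | H0]; [exact Psi_x0 |].
        destruct (Req_dec x x1) as [-> | H1]; [exact Psi_x1 |].
        pose proof (Psi0_pos_between x ltac:(lra) Hxr). lra. }
      exists 0. split; [apply Psi_dom_0, Hxr |].
      split; [lra | split; [exact Hzero | split]].
      * intros s [Hs _] Hs0. lra.
      * apply (Psi_s_neg_of_nonpos_at_0 x Hx ss Q_neg Q_pos Hxr Hnpos).
Qed.

Lemma Psi_neg_outside x s : 1 < x -> ~ (x0 <= x <= x1) -> 0 <= s -> Psi x s < 0.
Proof.
  intros Hx Hout Hs.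
  assert (Hneg0 : Psi x 0 < 0) by (apply Psi0_neg_outside; lra).
  destruct Hs as [Hs | <-]; [| exact Hneg0].
  destruct (Q_sign_change x) as (ss & _ & Q_neg & Q_pos).
  apply (Psi_s_neg_of_nonpos_at_0 x Hx ss Q_neg Q_pos); [lra | lra | exact Hs].
Qed.

End Real_roots.

End Psi.

Lemma sq_sum_pos u v : ~ (u = 0 /\ v = 0) -> 0 < u ^ 2 + v ^ 2.
Proof.
  intros Huv.
  destruct (Req_dec u 0) as [-> | Hu].
  - assert (v <> 0) by tauto. pose proof (pow2_gt_0 v). nra.
  - assert (0 < u ^ 2) by (destruct (Rdichotomy _ _ Hu); nra). nra.
Qed.

Lemma ln_cmod u v : ~ (u = 0 /\ v = 0) -> ln (cmod u v) = ln (u ^ 2 + v ^ 2) / 2.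
Proof. intros Huv. apply ln_sqrt, sq_sum_pos, Huv. Qed.

Section Phi_as_Psi.

Variables d a b : nat.
Hypothesis Hd : (0 < d)%nat.
Hypothesis Hb : (0 < b)%nat.

Local Notation r := (rr d b).
Local Notation Psi_ab := (Psi (INR d) (INR a + INR d) (rr d b)).

Lemma rr_gt_1 : 1 < r.
Proof.
  assert (0 < INR d) by (apply lt_0_INR; exact Hd).
  assert (0 < INR b) by (apply lt_0_INR; exact Hb).
  unfold rr. apply (Rlt_div_r 1); lra.
Qed.

Lemma d_rr_lt_a_d : RR d a > r -> INR d * r < INR a + INR d.
Proof.
  intros HR. assert (0 < INR d) by (apply lt_0_INR; exact Hd).
  unfold RR in HR. apply (Rlt_div_r r) in HR; lra.
Qed.

Lemma Phi_eq_Psi x y : 1 < x -> ~ (x = r /\ y = 0) -> Phi d a b x y = Psi_ab x (y ^ 2).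
Proof.
  intros Hx Hxy. pose proof rr_gt_1.
  unfold Phi, Psi.
  rewrite !ln_cmod; [field | ..]; intros [? ?]; lra.
Qed.

Lemma Phi_profile_of_Psi_profile x z : 1 < x -> Psi_dom r x z -> (x = r -> 0 < z) ->
  Psi_ab x z = 0 ->
  (forall s, Psi_dom r x s -> s < z -> 0 < Psi_ab x s) ->
  (forall s, z < s -> Psi_ab x s < 0) ->
  exists yx : R,
    0 <= yx /\ ~ (x = r /\ yx = 0) /\ Phi d a b x yx = 0 /\
    (forall y : R, 0 <= y -> ~ (x = r /\ y = 0) -> Phi d a b x y = 0 -> y = yx) /\
    (forall y : R, 0 < y < yx -> Phi d a b x y > 0) /\
    (forall y : R, y > yx -> Phi d a b x y < 0).
Proof.
  intros Hx [Hz Hxz] Hzr Hroot Hbelow Habove.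
  assert (Hsqrt : sqrt z ^ 2 = z) by (apply pow2_sqrt; exact Hz).
  assert (Hsqrt0 : 0 <= sqrt z) by apply sqrt_pos.
  assert (Hdom : forall y, ~ (x = r /\ y = 0) -> Psi_dom r x (y ^ 2)).
  { intros y Hy. split; [apply pow2_ge_0 |].
    apply sq_sum_pos. intros [? ?]. apply Hy. split; lra. }
  assert (Hne : forall y, 0 < y -> ~ (x = r /\ y = 0)) by (intros y Hy [_ ?]; lra).
  exists (sqrt z). split; [exact Hsqrt0 | split; [| split; [| split; [| split]]]].
  - intros [Hxr Hs]. specialize (Hzr Hxr). rewrite <- Hsqrt, Hs in Hzr. lra.
  - rewrite Phi_eq_Psi, Hsqrt; [exact Hroot | exact Hx |].
    intros [Hxr Hs]. specialize (Hzr Hxr). rewrite <- Hsqrt, Hs in Hzr. lra.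
  - intros y Hy Hxy Hphi. rewrite Phi_eq_Psi in Hphi by assumption.
    destruct (Rtotal_order (y ^ 2) z) as [Hlt | [Heq | Hgt]].
    + pose proof (Hbelow _ (Hdom y Hxy) Hlt). lra.
    + rewrite <- Heq, sqrt_pow2; [reflexivity | exact Hy].
    + pose proof (Habove _ Hgt). lra.
  - intros y Hy. rewrite Phi_eq_Psi by (try apply Hne; lra).
    apply Rlt_gt, Hbelow; [apply Hdom, Hne; lra |].
    rewrite <- Hsqrt. apply pow2_lt_compat; lra.
  - intros y Hy. rewrite Phi_eq_Psi by (try apply Hne; lra).
    apply Habove. rewrite <- Hsqrt. apply pow2_lt_compat; lra.
Qed.

End Phi_as_Psi.

Theorem lemma4p8 (d a b : nat) (x0 x1 : R) :
  (0 < d)%nat -> (0 < a)%nat -> (0 < b)%nat ->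
  RR d a >= 3 * rr d b ->
  1 < x0 < rr d b -> Phi d a b x0 0 = 0 ->
  rr d b < x1 -> Phi d a b x1 0 = 0 ->
  (forall x : R, 1 < x -> x0 <= x <= x1 ->
     exists yx : R,
       0 <= yx /\ ~ (x = rr d b /\ yx = 0) /\ Phi d a b x yx = 0 /\
       (forall y : R, 0 <= y -> ~ (x = rr d b /\ y = 0) ->
          Phi d a b x y = 0 -> y = yx) /\
       (forall y : R, 0 < y < yx -> Phi d a b x y > 0) /\
       (forall y : R, y > yx -> Phi d a b x y < 0)) /\
  (forall x : R, 1 < x -> ~ (x0 <= x <= x1) ->
     forall y : R, 0 <= y -> Phi d a b x y < 0).
Proof.
  intros Hd _ Hb HR Hx0 Phi_x0 Hx1 Phi_x1.
  pose proof (rr_gt_1 d b Hd Hb) as Hr.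
  assert (Hd' : 0 < INR d) by (apply lt_0_INR; exact Hd).
  assert (HD : INR d * rr d b < INR a + INR d) by (apply d_rr_lt_a_d; [exact Hd | lra]).
  rewrite (Phi_eq_Psi d a b Hd Hb) in Phi_x0, Phi_x1 by (try (intros [? ?]); lra).
  replace (0 ^ 2) with 0 in Phi_x0, Phi_x1 by ring.
  split.
  - intros x Hx Hin.
    destruct (Psi_root_profile _ _ _ Hd' HD Hr x0 x1 Hx0 Phi_x0 Phi_x1 x Hx Hin)
      as (z & Hz & Hzr & Hroot & Hbelow & Habove).
    exact (Phi_profile_of_Psi_profile d a b Hd Hb x z Hx Hz Hzr Hroot Hbelow Habove).
  - intros x Hx Hout y Hy.
    rewrite (Phi_eq_Psi d a b Hd Hb) by (try (intros [? ?]); lra).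
    exact (Psi_neg_outside _ _ _ Hd' HD Hr x0 x1 Hx0 Phi_x0 Hx1 Phi_x1 x (y ^ 2) Hx Hout
             (pow2_ge_0 y)).
Qed.
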